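(* Let $\phi:\mathbb{R}^2\rightarrow\mathbb{R}^2$ be an invertible affine transformation and let $\sigma:\mathbb R^2\to\mathbb R^2$ be the coordinatewise $\textsc{ReLU}$, $\sigma(x_1,x_2)=(\max\{x_1,0\},\max\{x_2,0\})$. Then there exist $a_1,a_2\in\mathbb{R}^2$ and $b_1,b_2\in\mathbb{R}$ such that, with $\mathcal S:=\{x\in\mathbb R^2:\langle a_1,x\rangle+b_1\ge0,\ \langle a_2,x\rangle+b_2\ge0\}$ and $x^\prime:=\phi^{-1}\circ\sigma\circ\phi(x)$, the following hold: if $x\in\mathcal S$, then $x^\prime=x$; if $x\in\mathbb R^2\setminus\mathcal S$, then $x^\prime\ne x$ and $x^\prime\in\partial\mathcal S$.
   Context: $\partial\mathcal S$ denotes the boundary of $\mathcal S$. *)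

From HB Require Import structures.
From mathcomp Require Import all_boot all_order all_algebra.
From mathcomp Require Import all_classical all_reals all_analysis.
Set Implicit Arguments. Unset Strict Implicit. Unset Printing Implicit Defensive.
Import Order.TTheory GRing.Theory Num.Theory.
Import numFieldNormedType.Exports.
Local Open Scope classical_set_scope.
Local Open Scope ring_scope.

Definition dotp (R : realType) (a x : 'rV[R]_2) : R := \sum_(i < 2) a 0 i * x 0 i.

Definition relu (R : realType) (x : 'rV[R]_2) : 'rV[R]_2 :=
  \row_(i < 2) Num.max (x 0 i) 0.

Definition affine_map (R : realType) (A : 'M[R]_2) (c : 'rV[R]_2) (x : 'rV[R]_2)
  : 'rV[R]_2 := x *m A + c.
Definition affine_inv (R : realType) (A : 'M[R]_2) (c : 'rV[R]_2) (y : 'rV[R]_2)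
  : 'rV[R]_2 := (y - c) *m invmx A.

Definition halfplanes (R : realType) (a1 a2 : 'rV[R]_2) (b1 b2 : R) : set 'rV[R]_2 :=
  [set x | 0 <= dotp a1 x + b1 /\ 0 <= dotp a2 x + b2].

Definition boundary (R : realType) (S : set 'rV[R]_2) : set 'rV[R]_2 :=
  closure S `\` interior S.

(* In the coordinates y = phi x the map becomes the ReLU, which fixes exactly
   the closed positive quadrant; pulled back by phi, the quadrant is the
   intersection of the two half-planes 0 <= (phi x)_k.  A point outside has a
   negative coordinate, which ReLU sets to 0, so its image moves and lands on
   a point of the quadrant with a zero coordinate; pushing that coordinate
   slightly below 0 leaves the quadrant, so the image lies on the boundary. *)
From HB Require Import structures.
From mathcomp Require Import all_boot all_order all_algebra.
From mathcomp Require Import all_classical all_reals all_analysis.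
From mathcomp Require Import lra.
Import Order.TTheory GRing.Theory Num.Theory.
Import numFieldNormedType.Exports.
Local Open Scope classical_set_scope.
Local Open Scope ring_scope.

Lemma notin_interior_of_ray (R : realType) (V : normedModType R) (S : set V)
    (z v : V) :
  (forall t : R, 0 < t -> ~ S (z - t *: v)) -> ~ interior S z.
Proof.
move=> Sout Sz.
have ray_cvg : (fun t : R => z - t *: v) t @[t --> 0] --> z - 0 *: v.
  by apply: cvgB; [exact: cvg_cst | apply: cvgZr_tmp; exact: cvg_id].
have /nbhs_ballP [e /= e0 He] : nbhs (0 : R) ((fun t => z - t *: v) @^-1` S).
  by apply: ray_cvg; rewrite scale0r subr0.
apply: (Sout (e / 2)); first by lra.
by apply: He; rewrite /ball /= sub0r normrN ger0_norm; lra.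
Qed.

Section ReluCoordinates.
Variable R : realType.
Implicit Types y : 'rV[R]_2.

Lemma relu_id y : (forall k, 0 <= y 0 k) -> relu y = y.
Proof. by move=> y_ge0; apply/rowP => k; rewrite mxE; apply/max_idPl. Qed.

Lemma relu_ge0 y k : 0 <= relu y 0 k.
Proof. by rewrite mxE le_max lexx orbT. Qed.

Lemma relu_eq0 y k : y 0 k <= 0 -> relu y 0 k = 0.
Proof. by move=> y_le0; rewrite mxE; apply/max_idPr. Qed.

End ReluCoordinates.

Section AffineConjugate.
Context {R : realType} {A : 'M[R]_2} {c : 'rV[R]_2}.
Hypothesis A_unit : A \in unitmx.

Local Notation phi := (affine_map A c).
Local Notation phi_inv := (affine_inv A c).
Local Notation S := (halfplanes (col 0 A)^T (col 1 A)^T (c 0 0) (c 0 1)).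

Lemma affine_mapK : cancel phi phi_inv.
Proof. by move=> x; rewrite /affine_map /affine_inv addrK mulmxK. Qed.

Lemma affine_invK : cancel phi_inv phi.
Proof. by move=> y; rewrite /affine_map /affine_inv mulmxKV // subrK. Qed.

Lemma affine_map_coord x k : phi x 0 k = dotp (col k A)^T x + c 0 k.
Proof.
rewrite /dotp /affine_map !mxE; congr (_ + _).
by apply: eq_bigr => i _; rewrite !mxE mulrC.
Qed.

Lemma halfplanes_affineE x : S x <-> forall k, 0 <= phi x 0 k.
Proof.
rewrite /halfplanes /= -!affine_map_coord.
split=> [[x0 x1] k | x_ge0]; last by split; apply: x_ge0.
by case: k => [[|[|//]] k_lt2]; [apply: etrans x0 | apply: etrans x1];
  congr (_ <= phi x 0 _); apply: val_inj.
Qed.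

Lemma relu_conj_id x : S x -> phi_inv (relu (phi x)) = x.
Proof. by move=> /halfplanes_affineE x_ge0; rewrite relu_id // affine_mapK. Qed.

Lemma relu_conj_mem x : S (phi_inv (relu (phi x))).
Proof. by apply/halfplanes_affineE => k; rewrite affine_invK relu_ge0. Qed.

Lemma boundary_of_zero_coord z k : S z -> phi z 0 k = 0 -> boundary S z.
Proof.
move=> Sz zk0; split; first exact: subset_closure.
(* along the direction phi^-1 e_k only the k-th coordinate of phi changes *)
apply: (@notin_interior_of_ray _ _ _ z (delta_mx 0 k *m invmx A)) => t t_gt0.
move=> /halfplanes_affineE /(_ k).
rewrite /affine_map mulmxBl -scalemxAl mulmxKV // addrAC.
rewrite -[z *m A + c]/(phi z); move: (phi z) zk0 => y yk0.
by rewrite !mxE yk0 !eqxx mulr1 sub0r oppr_ge0 leNgt t_gt0.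
Qed.

End AffineConjugate.

Theorem lemma1 (R : realType) (A : 'M[R]_2) (c : 'rV[R]_2) (hA : A \in unitmx) :
  exists (a1 a2 : 'rV[R]_2) (b1 b2 : R),
    forall x : 'rV[R]_2,
      let x' := affine_inv A c (relu (affine_map A c x)) in
      (halfplanes a1 a2 b1 b2 x -> x' = x) /\
      (~ halfplanes a1 a2 b1 b2 x ->
         x' <> x /\ boundary (halfplanes a1 a2 b1 b2) x').
Proof.
exists (col 0 A)^T, (col 1 A)^T, (c 0 0), (c 0 1) => x x'.
split=> [Sx | xNS]; first exact: relu_conj_id hA x Sx.
have [k xk_lt0] : exists k, affine_map A c x 0 k < 0.
  apply/not_existsP => x_ge0; apply: xNS; apply/halfplanes_affineE => k.
  by rewrite leNgt; apply/negP/x_ge0.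
have x'k0 : affine_map A c x' 0 k = 0.
  by rewrite affine_invK // relu_eq0 // ltW.
split; first by move=> x'x; move: xk_lt0; rewrite -x'x x'k0 ltxx.
exact: boundary_of_zero_coord hA x' k (relu_conj_mem hA x) x'k0.
Qed.
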